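(* Let $G$ be a finite simple graph. Then $G$ has no edges if and only if its chromatic symmetric function $X_G$ belongs to $\Gamma$.
   Context: For a finite simple graph $G=(V,E)$ with $V=\{v_1,\dots,v_n\}$, a proper coloring is a map $\kappa:V\to\{1,2,\dots\}$ with $\kappa(v_i)\neq\kappa(v_j)$ whenever $\{v_i,v_j\}\in E$. The chromatic symmetric function is $X_G=\sum_\kappa x_{\kappa(v_1)}\cdots x_{\kappa(v_n)}$, summed over all proper colorings. Let $p_r=\sum_i x_i^r$ be the power sum symmetric functions and $\Gamma=\mathbb{Q}[p_1,p_3,p_5,\dots]$ the subalgebra of the algebra $\Lambda$ of symmetric functions generated by the odd power sums. *)

From HB Require Import structures.
From mathcomp Require Import all_boot all_order all_algebra.
Set Implicit Arguments. Unset Strict Implicit. Unset Printing Implicit Defensive.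
Import Order.TTheory GRing.Theory Num.Theory.
Local Open Scope ring_scope.

(* Formal power series over Q in the countably many variables x_0, x_1, ...
   (colours are indexed from 0 instead of 1).  A monomial is given by an
   exponent function a : 'I_m -> nat for some m, denoting
   x_0^(a 0) * ... * x_(m-1)^(a (m-1)); every monomial arises this way
   (the same monomial may also be given with extra trailing zero exponents).
   A series is its coefficient function. *)
Definition fps := forall m : nat, ('I_m -> nat) -> rat.

Definition simple_graph (V : finType) (e : rel V) : Prop :=
  symmetric e /\ irreflexive e.

Definition proper_col (V : finType) (e : rel V) m (k : {ffun V -> 'I_m}) : bool :=
  [forall x, forall y, e x y ==> (k x != k y)].

(* Chromatic symmetric function X_G: the coefficient of x^a is the number of
   proper colourings kappa with #{v | kappa v = i} = a i for all i
   (such colourings only use colours < m). *)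
Definition chromsym (V : finType) (e : rel V) : fps := fun m a =>
  (#|[pred k : {ffun V -> 'I_m} | proper_col e k &&
       [forall i, #|[pred v | k v == i]| == a i]]|)%:R.

(* Product of power sums p_lam = p_(lam_0) * ... * p_(lam_(l-1)) for a list
   lam of positive integers: expanding the product, each factor p_(lam_j)
   contributes x_(f j)^(lam_j); the coefficient of x^a is the number of
   f with sum_(j | f j = i) lam_j = a i for all i. *)
Definition psum_prod (lam : seq nat) : fps := fun m a =>
  (#|[pred f : {ffun 'I_(size lam) -> 'I_m} |
       [forall i, (\sum_(j < size lam | f j == i) nth 0%N lam j)%N == a i]]|)%:R.

(* Gamma = Q[p_1, p_3, p_5, ...]: the Q-span of the products of odd power sums
   (the empty product being 1). *)
Definition in_Gamma (F : fps) : Prop :=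
  exists c : seq (rat * seq nat),
    all (fun q => all odd q.2) c /\
    forall m (a : 'I_m -> nat), F m a = \sum_(q <- c) q.1 * psum_prod q.2 a.

(* Fix two distinct colours c0, c1 and write [a] for the coefficient of x^a.
   Recolouring the first index of colour c0 or c1 by the other of the two colours
   changes the c1-weight of a function by an odd amount when all weights are odd;
   this involution shows that every product p_lam of odd power sums satisfies
   [x_c0^2 P] + [x_c1^2 P] = [x_c0 x_c1 P], with P the product of the remaining
   variables, hence so does every element of Gamma.  Taking |V| colours and unit
   weights, the same count shows that the colourings of shape x_c0^2 P or x_c1^2 P
   are exactly as many as the bijective ones; all bijective colourings are proper,
   but if xy is an edge, colouring y like x is an improper colouring of shape
   x_c0^2 P, so X_G violates the identity.  An edgeless graph has X_G = p_1^|V|. *)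

From HB Require Import structures.
From mathcomp Require Import all_boot all_order all_algebra perm.
From mathcomp Require Import zify.
Set Implicit Arguments. Unset Strict Implicit. Unset Printing Implicit Defensive.
Import Order.TTheory GRing.Theory Num.Theory.

Section FibreWeight.
Variables (D : finType) (w : D -> nat) (m : nat).

Definition fibre_weight (f : {ffun D -> 'I_m}) (i : 'I_m) : nat :=
  \sum_(j | f j == i) w j.

Definition has_fibres (f : {ffun D -> 'I_m}) (a : 'I_m -> nat) : bool :=
  [forall i, fibre_weight f i == a i].

Definition recolour (f : {ffun D -> 'I_m}) (j0 : D) (c : 'I_m) : {ffun D -> 'I_m} :=
  [ffun j => if j == j0 then c else f j].

Lemma recolourE f j0 c j : recolour f j0 c j = if j == j0 then c else f j.
Proof. exact: ffunE. Qed.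

Lemma fibre_weight_recolour f j0 c i :
  fibre_weight (recolour f j0 c) i + (if f j0 == i then w j0 else 0)
  = fibre_weight f i + (if c == i then w j0 else 0).
Proof.
rewrite /fibre_weight big_mkcond [in RHS]big_mkcond.
rewrite (bigD1 j0) //= [in RHS](bigD1 j0) //=.
rewrite recolourE eqxx.
under eq_bigr => j /negbTE nj0 do rewrite recolourE nj0.
lia.
Qed.

End FibreWeight.

Lemma fibre_weight_unit (D : finType) m (f : {ffun D -> 'I_m}) i :
  fibre_weight (fun=> 1) f i = #|[pred v | f v == i]|.
Proof. by rewrite /fibre_weight sum1dep_card; apply: eq_card => v; rewrite inE. Qed.

Lemma card_has_fibres_bij (D1 D2 : finType) (h : D1 -> D2) (w1 : D1 -> nat)
    (w2 : D2 -> nat) m a :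
  bijective h -> w1 =1 w2 \o h ->
  #|[pred f : {ffun D1 -> 'I_m} | has_fibres w1 f a]| =
  #|[pred k : {ffun D2 -> 'I_m} | has_fibres w2 k a]|.
Proof.
move=> bij_h w12; pose comp_h (k : {ffun D2 -> 'I_m}) := [ffun j => k (h j)].
have bij_comp : bijective comp_h.
  case: bij_h => hi hK hiK; exists (fun f : {ffun D1 -> 'I_m} => [ffun v => f (hi v)]).
    by move=> k; apply/ffunP => v; rewrite !ffunE hiK.
  by move=> f; apply/ffunP => j; rewrite !ffunE hK.
rewrite -(on_card_preimset (onW_bij _ bij_comp)); apply: eq_card => k.
rewrite !inE; apply: eq_forallb => i; congr (_ == _).
rewrite /fibre_weight (reindex h (onW_bij _ bij_h)) /=.
by apply: eq_big => j; rewrite ?ffunE ?w12.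
Qed.

Section ColourSwap.
Variables (D : finType) (w : D -> nat) (m : nat) (c0 c1 : 'I_m).
Hypothesis c01 : c0 != c1.

Definition swap_at (f : {ffun D -> 'I_m}) (j0 : D) : {ffun D -> 'I_m} :=
  recolour f j0 (tperm c0 c1 (f j0)).

Definition swap_first (f : {ffun D -> 'I_m}) : {ffun D -> 'I_m} :=
  if [pick j | pred2 c0 c1 (f j)] is Some j0 then swap_at f j0 else f.

Lemma pred2_tperm c : pred2 c0 c1 (tperm c0 c1 c) = pred2 c0 c1 c.
Proof. by case: tpermP => [->|->|] //=; rewrite !eqxx orbT. Qed.

Lemma swap_atK (f : {ffun D -> 'I_m}) j0 : swap_at (swap_at f j0) j0 = f.
Proof.
by apply/ffunP => j; rewrite !recolourE; case: eqP => [->|]; rewrite ?eqxx ?tpermK.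
Qed.

Lemma pick_swap_at (f : {ffun D -> 'I_m}) j0 :
  [pick j | pred2 c0 c1 (swap_at f j0 j)] = [pick j | pred2 c0 c1 (f j)].
Proof.
by apply: eq_pick => j; rewrite recolourE; case: eqP => [->|]; rewrite ?pred2_tperm.
Qed.

Lemma swap_firstK : involutive swap_first.
Proof.
move=> f; rewrite /swap_first.
case pick_f: [pick j | pred2 c0 c1 (f j)] => [j0|]; last by rewrite pick_f.
by rewrite pick_swap_at pick_f swap_atK.
Qed.

Lemma fibre_weight_swap_at_out (f : {ffun D -> 'I_m}) j0 i :
  pred2 c0 c1 (f j0) -> ~~ pred2 c0 c1 i ->
  fibre_weight w (swap_at f j0) i = fibre_weight w f i.
Proof.
move=> fj0 /norP[i0 i1].
have neq_i c : pred2 c0 c1 c -> (c == i) = false.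
  by case/orP=> /eqP->; apply/negbTE; rewrite eq_sym.
have := fibre_weight_recolour w f j0 (tperm c0 c1 (f j0)) i.
by rewrite !neq_i ?pred2_tperm // !addn0.
Qed.

Hypothesis w_odd : forall j, odd (w j).

Lemma fibre_weight_swap_at_pair (f : {ffun D -> 'I_m}) j0 : pred2 c0 c1 (f j0) ->
  fibre_weight w (swap_at f j0) c0 + fibre_weight w (swap_at f j0) c1 =
    fibre_weight w f c0 + fibre_weight w f c1 /\
  odd (fibre_weight w (swap_at f j0) c1) = ~~ odd (fibre_weight w f c1).
Proof.
have F := fibre_weight_recolour w f j0 (tperm c0 c1 (f j0)); rewrite -/(swap_at f j0) in F.
have c10 : c1 != c0 by rewrite eq_sym.
have oj0 := w_odd j0.
case/orP=> /eqP fj0; rewrite fj0 ?tpermL ?tpermR in F;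
  have := F c0; have := F c1; rewrite !eqxx (negbTE c01) (negbTE c10) !addn0 => F1 F0.
- by split; [lia | rewrite F1 oddD oj0 addbT].
- by split; [lia | rewrite -F1 oddD oj0 addbT negbK].
Qed.

Definition pair_shape (f : {ffun D -> 'I_m}) : bool :=
  [forall i, ~~ pred2 c0 c1 i ==> (fibre_weight w f i == 1)] &&
  (fibre_weight w f c0 + fibre_weight w f c1 == 2).

Lemma pair_shape_swap_first f : pair_shape f ->
  pair_shape (swap_first f) &&
  (odd (fibre_weight w (swap_first f) c1) == ~~ odd (fibre_weight w f c1)).
Proof.
case/andP=> /forallP f_out /eqP f_pair; rewrite /swap_first.
case: pickP => [j0 fj0 | none]; last first.
  have pair0 c : pred2 c0 c1 c -> fibre_weight w f c = 0.
    move=> c_pair; rewrite /fibre_weight big_pred0 // => j.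
    by apply: contraFF (none j) => /eqP->.
  by move: f_pair; rewrite !pair0 //= eqxx ?orbT.
have [sum_eq odd_eq] := fibre_weight_swap_at_pair fj0.
rewrite /pair_shape sum_eq odd_eq f_pair !eqxx !andbT.
apply/forallP => i; apply/implyP => i_out.
by rewrite fibre_weight_swap_at_out //; apply: implyP i_out.
Qed.

Lemma card_pair_shape_parity :
  #|[pred f | pair_shape f && ~~ odd (fibre_weight w f c1)]| =
  #|[pred f | pair_shape f && odd (fibre_weight w f c1)]|.
Proof.
rewrite -(card_image (can_inj swap_firstK)); apply: eq_card => g.
apply/imageP/idP => [[f] | ].
  rewrite !inE => /andP[f_pair f_even] ->.
  by case/andP: (pair_shape_swap_first f_pair) => -> /eqP->.
rewrite inE => /andP[g_pair g_odd]; exists (swap_first g); last by rewrite swap_firstK.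
case/andP: (pair_shape_swap_first g_pair) => g'_pair /eqP g'_odd.
by rewrite inE g'_pair g'_odd g_odd.
Qed.

Definition pair_exps (x y : nat) (i : 'I_m) : nat :=
  if i == c0 then x else if i == c1 then y else 1.

Lemma has_pair_exps f x y : x + y = 2 ->
  has_fibres w f (pair_exps x y) = pair_shape f && (fibre_weight w f c1 == y).
Proof.
move=> xy2; have c10 : c1 != c0 by rewrite eq_sym.
rewrite /pair_exps; apply/forallP/andP => [f_exps|].
  have /eqP f0 := f_exps c0; have /eqP f1 := f_exps c1.
  rewrite eqxx in f0; rewrite eqxx (negbTE c10) in f1.
  split; last by rewrite f1.
  apply/andP; split; last by rewrite f0 f1 xy2.
  apply/forallP => i; apply/implyP => /norP[/negbTE i0 /negbTE i1].
  by have := f_exps i; rewrite i0 i1.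
case=> /andP[/forallP f_out /eqP f_pair] /eqP f1 i.
case: (eqVneq i c0) => [->|i0]; first by apply/eqP; lia.
case: (eqVneq i c1) => [->|i1]; first by rewrite f1.
by have := f_out i; rewrite /= (negbTE i0) (negbTE i1).
Qed.

Lemma pair_shape_weight_le2 f : pair_shape f -> fibre_weight w f c1 <= 2.
Proof. by case/andP => _ /eqP; lia. Qed.

Lemma card_pair_exps_even :
  #|[pred f | has_fibres w f (pair_exps 2 0)]| +
  #|[pred f | has_fibres w f (pair_exps 0 2)]| =
  #|[pred f | pair_shape f && ~~ odd (fibre_weight w f c1)]|.
Proof.
rewrite -cardUI (@eq_card0 _ [predI _ & _]) ?addn0 => [|f].
  apply: eq_card => f; rewrite !inE !has_pair_exps //.
  case f_pair: (pair_shape f) => //=; have := pair_shape_weight_le2 f_pair.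
  by case: (fibre_weight w f c1) => [|[|[|n]]].
rewrite !inE !has_pair_exps //.
by case: (pair_shape f); case: (fibre_weight w f c1) => [|[|n]].
Qed.

Lemma card_pair_exps_odd :
  #|[pred f | has_fibres w f (pair_exps 1 1)]| =
  #|[pred f | pair_shape f && odd (fibre_weight w f c1)]|.
Proof.
apply: eq_card => f; rewrite !inE !has_pair_exps //.
case f_pair: (pair_shape f) => //=; have := pair_shape_weight_le2 f_pair.
by case: (fibre_weight w f c1) => [|[|[|n]]].
Qed.

Lemma card_pair_exps :
  #|[pred f | has_fibres w f (pair_exps 2 0)]| +
  #|[pred f | has_fibres w f (pair_exps 0 2)]| =
  #|[pred f | has_fibres w f (pair_exps 1 1)]|.
Proof. by rewrite card_pair_exps_even card_pair_shape_parity card_pair_exps_odd. Qed.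

End ColourSwap.

Section EdgeObstruction.
Variables (V : finType) (e : rel V).
Hypothesis e_irr : irreflexive e.

Lemma injective_unit_fibres m (k : {ffun V -> 'I_m}) :
  has_fibres (fun=> 1) k (fun=> 1) -> injective k.
Proof.
move=> /forallP k_fib u v kuv; apply/eqP; apply: contraT => uv.
have /subset_leq_card : pred2 u v \subset [pred z | k z == k u].
  by apply/subsetP => z /pred2P[]->; rewrite inE ?kuv.
by rewrite card2 uv -fibre_weight_unit (eqP (k_fib _)).
Qed.

Lemma proper_col_injective m (k : {ffun V -> 'I_m}) : injective k -> proper_col e k.
Proof.
move=> k_inj; apply/forallP => u; apply/forallP => v; apply/implyP => euv.
by apply: contraTneq euv => /k_inj->; rewrite e_irr.
Qed.

Variables (x y : V).
Hypothesis exy : e x y.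

Lemma enum_rank_edge_neq : enum_rank x != enum_rank y.
Proof. by rewrite (inj_eq enum_rank_inj); apply: contraTneq exy => ->; rewrite e_irr. Qed.

Local Notation c0 := (enum_rank x).
Local Notation c1 := (enum_rank y).
Local Notation rank_col := ([ffun v => enum_rank v] : {ffun V -> 'I_#|V|}).
Local Notation collapse_col := (recolour rank_col y c0).

Lemma has_fibres_rank_col : has_fibres (fun=> 1) rank_col (fun=> 1).
Proof.
apply/forallP => i; rewrite fibre_weight_unit -(card1 (enum_val i)).
by apply/eqP/eq_card => v; rewrite !inE ffunE -(inj_eq enum_rank_inj) enum_valK.
Qed.

Lemma has_fibres_collapse_col : has_fibres (fun=> 1) collapse_col (pair_exps c0 c1 2 0).
Proof.
have c10 : c1 != c0 by rewrite eq_sym enum_rank_edge_neq.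
apply/forallP => i; have := fibre_weight_recolour (fun=> 1) rank_col y c0 i.
have /forallP/(_ i)/eqP-> := has_fibres_rank_col; rewrite ffunE /pair_exps.
case: (eqVneq i c0) => [->|i0]; last case: (eqVneq i c1) => [->|i1];
  by rewrite ?(negbTE c10) => ?; apply/eqP; lia.
Qed.

Lemma collapse_col_improper : ~~ proper_col e collapse_col.
Proof.
have xy : x != y by apply: contraTneq exy => ->; rewrite e_irr.
apply/negP => /forallP/(_ x)/forallP/(_ y).
by rewrite exy !recolourE eqxx (negbTE xy) ffunE eqxx.
Qed.

Lemma card_proper_pair_exps_lt :
  #|[pred k | proper_col e k && has_fibres (fun=> 1) k (pair_exps c0 c1 2 0)]| +
  #|[pred k | proper_col e k && has_fibres (fun=> 1) k (pair_exps c0 c1 0 2)]| <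
  #|[pred k | proper_col e k && has_fibres (fun=> 1) k (pair_exps c0 c1 1 1)]|.
Proof.
have c01 := enum_rank_edge_neq.
have all_proper :
    #|[pred k | proper_col e k && has_fibres (fun=> 1) k (pair_exps c0 c1 1 1)]| =
    #|[pred k : {ffun V -> 'I_#|V|} | has_fibres (fun=> 1) k (pair_exps c0 c1 1 1)]|.
  apply: eq_card => k; rewrite !inE andb_idl // => k_fib.
  apply: proper_col_injective; apply: injective_unit_fibres; apply/forallP => i.
  by have /forallP/(_ i) := k_fib; rewrite /pair_exps; case: (i == c0); case: (i == c1).
rewrite all_proper -(card_pair_exps (w := fun _ : V => 1) c01) // -addSn leq_add //.
  apply: proper_card; apply/properP; split; first by apply/subsetP => k /andP[].
  exists collapse_col; rewrite !inE ?has_fibres_collapse_col //.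
  by rewrite (negbTE collapse_col_improper).
by apply: subset_leq_card; apply/subsetP => k /andP[].
Qed.

End EdgeObstruction.

Local Open Scope ring_scope.

Lemma psum_prodE (lam : seq nat) m (a : 'I_m -> nat) :
  psum_prod lam a =
    #|[pred f | has_fibres (fun j : 'I_(size lam) => nth 0%N lam j) f a]|%:R.
Proof. by []. Qed.

Lemma chromsymE (V : finType) (e : rel V) m (a : 'I_m -> nat) :
  chromsym e a =
    #|[pred k : {ffun V -> 'I_m} | proper_col e k && has_fibres (fun=> 1%N) k a]|%:R.
Proof.
congr _%:R; apply: eq_card => k; rewrite !inE; congr (_ && _).
by apply: eq_forallb => i; rewrite fibre_weight_unit.
Qed.

Lemma psum_prod_pair_exps (lam : seq nat) m (c0 c1 : 'I_m) :
  c0 != c1 -> all odd lam ->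
  psum_prod lam (pair_exps c0 c1 2 0) + psum_prod lam (pair_exps c0 c1 0 2) =
  psum_prod lam (pair_exps c0 c1 1 1).
Proof.
move=> c01 lam_odd; rewrite !psum_prodE -natrD (card_pair_exps c01) // => j.
by apply: (allP lam_odd); apply: mem_nth.
Qed.

Lemma in_Gamma_pair_exps (F : fps) m (c0 c1 : 'I_m) : c0 != c1 -> in_Gamma F ->
  F m (pair_exps c0 c1 2 0) + F m (pair_exps c0 c1 0 2) = F m (pair_exps c0 c1 1 1).
Proof.
move=> c01 [c [c_odd F_eq]]; rewrite !F_eq -big_split; apply: eq_big_seq => q q_c /=.
by rewrite -mulrDr psum_prod_pair_exps //; apply: (allP c_odd).
Qed.

Lemma chromsym_edgeless (V : finType) (e : rel V) : (forall x y, ~~ e x y) ->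
  forall m (a : 'I_m -> nat), chromsym e a = psum_prod (nseq #|V| 1%N) a.
Proof.
move=> no_edge m a; rewrite chromsymE psum_prodE.
have size_n := size_nseq #|V| 1%N.
pose h j := enum_val (cast_ord size_n j).
have bij_h : bijective h.
  exists (fun v => cast_ord (esym size_n) (enum_rank v)) => [j | v].
    by rewrite /h enum_valK cast_ordK.
  by rewrite /h cast_ordKV enum_rankK.
rewrite (card_has_fibres_bij (w2 := fun=> 1%N) _ bij_h) => [|j]; last first.
  by rewrite /= nth_nseq -{2}size_n ltn_ord.
congr _%:R; apply: eq_card => k; rewrite !inE andb_idl // => _.
by apply/forallP => u; apply/forallP => v; rewrite (negbTE (no_edge u v)).
Qed.

Lemma chromsym_pair_exps_lt (V : finType) (e : rel V) x y : irreflexive e -> e x y ->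
  chromsym e (pair_exps (enum_rank x) (enum_rank y) 2 0) +
  chromsym e (pair_exps (enum_rank x) (enum_rank y) 0 2) <
  chromsym e (pair_exps (enum_rank x) (enum_rank y) 1 1).
Proof.
by move=> e_irr exy; rewrite !chromsymE -natrD ltr_nat card_proper_pair_exps_lt.
Qed.

Unset Implicit Arguments.

Theorem mainTheorem1 (V : finType) (e : rel V) (hG : simple_graph e) :
  (forall x y : V, ~~ e x y) <-> in_Gamma (chromsym e).
Proof.
case: hG => _ e_irr; split => [no_edge | X_Gamma x y].
  exists [:: (1, nseq #|V| 1%N)]; split; first by rewrite /= all_nseq orbT.
  by move=> m a; rewrite big_seq1 mul1r chromsym_edgeless.
apply/negP => exy; have := chromsym_pair_exps_lt e_irr exy.
by rewrite (in_Gamma_pair_exps (enum_rank_edge_neq e_irr exy) X_Gamma) ltxx.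
Qed.
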